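(* Let $\vec{\mathcal G}=([n],E)$ be an ergodic graph of a deterministic two-player mean-payoff game, suppose $r\in\mathcal P^{\sigma,\tau}$ for some $(\sigma,\tau)\in\Xi$, and let $\gamma$ satisfy $1>\gamma>1-\frac{1}{6n^2\Delta(r)}$. Then $(\sigma,\tau)$ is the unique pair of optimal policies in the discounted game with weights $r$ and discount factor $\gamma$. Consequently the Blackwell threshold satisfies $\gamma^*\le 1-\frac{1}{6n^2\Delta(r)}$.
   Context: Setting: directed graph $\vec{\mathcal G}=([n],E)$ without multiple edges, each vertex having an outgoing edge, $[n]=V_{\max}\uplus V_{\min}$, weights $r\in\mathbb R^E$. Ergodic equation in $(\lambda,u)$: $\lambda+u_i=\max_{(i,j)\in E}\{r_{ij}+u_j\}$ ($i\in V_{\max}$), $\lambda+u_i=\min_{(i,j)\in E}\{r_{ij}+u_j\}$ ($i\in V_{\min}$); $u$ is a bias if $(\lambda,u)$ solves it; ergodic graph: solvable for every $r$; $\lambda$ is the mean-payoff value. Policies $\sigma:V_{\max}\to[n]$, $\tau:V_{\min}\to[n]$ choose outgoing edges; a pair is bias-induced if some bias makes each chosen edge attain the max/min. $\Xi$: pairs whose induced subgraph has exactly one directed cycle; $\mathcal P^{\sigma,\tau}$: set of $r$ for which $(\sigma,\tau)$ is the only bias-induced pair. Condition number: $\Delta(r)=\dfrac{\max\{|r_{ij}-\lambda|:(i,j)\in E\}}{\min\{|r_{ij}-\lambda+u_j-u_i|:(i,j)\in E,\ r_{ij}-\lambda+u_j-u_i\ne0\}}$ ($\Delta=1$ if the denominator's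 set is empty). Discounted game with factor $\gamma\in(0,1)$: along play $i_0,i_1,\dots$ Max receives $(1-\gamma)\sum_{t\ge0}\gamma^t r_{i_ti_{t+1}}$; its value $\lambda^{(\gamma)}\in\mathbb R^n$ is the unique solution of $\lambda^{(\gamma)}_i=\max_{(i,j)\in E}\{(1-\gamma)r_{ij}+\gamma\lambda^{(\gamma)}_j\}$ ($i\in V_{\max}$), $\lambda^{(\gamma)}_i=\min_{(i,j)\in E}\{(1-\gamma)r_{ij}+\gamma\lambda^{(\gamma)}_j\}$ ($i\in V_{\min}$); a policy is optimal iff it uses edges attaining these maxima (resp. minima). The Blackwell threshold $\gamma^*$ is the smallest $\gamma^*\in(0,1)$ such that any policy optimal for some $\gamma\in(\gamma^*,1)$ is optimal for all $\gamma\in(\gamma^*,1)$. *)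

From HB Require Import structures.
From mathcomp Require Import all_boot all_order all_algebra.
From mathcomp Require Import reals.
Set Implicit Arguments. Unset Strict Implicit. Unset Printing Implicit Defensive.
Import Order.TTheory GRing.Theory Num.Theory.
Local Open Scope ring_scope.

Section MeanPayoff.
Context {R : realType} {n : nat}.
(* Graph: vertices 'I_n, edge relation E; Vmax : pred 'I_n (Vmin = complement);
   weights r : 'I_n -> 'I_n -> R (only the values on edges matter). *)
Variables (E : rel 'I_n) (Vmax : pred 'I_n) (r : 'I_n -> 'I_n -> R).

Definition attains_max (i : 'I_n) (f : 'I_n -> R) (v : R) : Prop :=
  (exists2 j, E i j & f j = v) /\ (forall j, E i j -> f j <= v).
Definition attains_min (i : 'I_n) (f : 'I_n -> R) (v : R) : Prop :=
  (exists2 j, E i j & f j = v) /\ (forall j, E i j -> v <= f j).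

Definition ergodic_sol (lam : R) (u : 'I_n -> R) : Prop :=
  forall i, if Vmax i then attains_max i (fun j => r i j + u j) (lam + u i)
            else attains_min i (fun j => r i j + u j) (lam + u i).

Definition disc_value (gamma : R) (v : 'I_n -> R) : Prop :=
  forall i, if Vmax i then attains_max i (fun j => (1 - gamma) * r i j + gamma * v j) (v i)
            else attains_min i (fun j => (1 - gamma) * r i j + gamma * v j) (v i).

Definition reduced_weight (lam : R) (u : 'I_n -> R) (i j : 'I_n) : R :=
  r i j - lam + u j - u i.

Definition Delta (lam : R) (u : 'I_n -> R) : R :=
  let num := \big[Num.max/0]_(i : 'I_n) \big[Num.max/0]_(j : 'I_n | E i j) `|r i j - lam| in
  let s := [seq `|reduced_weight lam u p.1 p.2| |
             p <- [seq p <- enum [set: 'I_n * 'I_n] |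
                     E p.1 p.2 && (reduced_weight lam u p.1 p.2 != 0)]] in
  if s is x :: s' then num / foldr Num.min x s' else 1.

End MeanPayoff.

Section Policies.
Context {R : realType} {n : nat}.
Variables (E : rel 'I_n) (Vmax : pred 'I_n) (r : 'I_n -> 'I_n -> R).

Definition ergodic_graph_over (R' : realType) : Prop :=
  forall w : 'I_n -> 'I_n -> R', exists (lam : R') (u : 'I_n -> R'), ergodic_sol E Vmax w lam u.

(* A pair of policies (σ,τ) is encoded as one map pol : 'I_n -> 'I_n with
   σ = pol on Vmax and τ = pol on Vmin. *)
Definition policy_pair (pol : 'I_n -> 'I_n) : Prop := forall i, E i (pol i).
Definition max_policy (sigma : 'I_n -> 'I_n) : Prop :=
  forall i, Vmax i -> E i (sigma i).
Definition min_policy (tau : 'I_n -> 'I_n) : Prop :=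
  forall i, ~~ Vmax i -> E i (tau i).

Definition bias_induced (pol : 'I_n -> 'I_n) : Prop :=
  exists lam u, ergodic_sol E Vmax r lam u /\
    forall i, r i (pol i) + u (pol i) = lam + u i.

(* Ξ : the subgraph ([n], {(i, pol i)}) has exactly one directed cycle
   (directed cycles identified up to cyclic rotation). *)
Definition is_dcycle (pol : 'I_n -> 'I_n) (c : seq 'I_n) : Prop :=
  [/\ c != [::], uniq c & cycle (frel pol) c].
Definition in_Xi (pol : 'I_n -> 'I_n) : Prop :=
  exists c, is_dcycle pol c /\
    forall c', is_dcycle pol c' -> exists k, c' = rot k c.

Definition in_P (pol : 'I_n -> 'I_n) : Prop :=
  bias_induced pol /\
  forall pol', policy_pair pol' -> bias_induced pol' -> forall i, pol' i = pol i.

Definition pair_attains (gamma : R) (v : 'I_n -> R) (pol : 'I_n -> 'I_n) : Prop :=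
  forall i, v i = (1 - gamma) * r i (pol i) + gamma * v (pol i).

Definition unique_optimal_pair (gamma : R) (pol : 'I_n -> 'I_n) : Prop :=
  (exists v, disc_value E Vmax r gamma v) /\
  forall v, disc_value E Vmax r gamma v ->
    pair_attains gamma v pol /\
    forall pol', policy_pair pol' -> pair_attains gamma v pol' ->
      forall i, pol' i = pol i.

Definition max_optimal (gamma : R) (sigma : 'I_n -> 'I_n) : Prop :=
  exists v, disc_value E Vmax r gamma v /\
    forall i, Vmax i -> v i = (1 - gamma) * r i (sigma i) + gamma * v (sigma i).
Definition min_optimal (gamma : R) (tau : 'I_n -> 'I_n) : Prop :=
  exists v, disc_value E Vmax r gamma v /\
    forall i, ~~ Vmax i -> v i = (1 - gamma) * r i (tau i) + gamma * v (tau i).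

Definition blackwell_property (g : R) : Prop :=
  (forall sigma, max_policy sigma ->
     (exists gamma, g < gamma < 1 /\ max_optimal gamma sigma) ->
     forall gamma, g < gamma < 1 -> max_optimal gamma sigma) /\
  (forall tau, min_policy tau ->
     (exists gamma, g < gamma < 1 /\ min_optimal gamma tau) ->
     forall gamma, g < gamma < 1 -> min_optimal gamma tau).

Definition blackwell_threshold (gs : R) : Prop :=
  0 < gs < 1 /\ blackwell_property gs /\
  forall g, 0 < g < 1 -> blackwell_property g -> gs <= g.

End Policies.

From HB Require Import structures.
From mathcomp Require Import all_boot all_order all_algebra.
From mathcomp Require Import reals.
From mathcomp Require Import ring lra zify.
Set Implicit Arguments. Unset Strict Implicit. Unset Printing Implicit Defensive.
Import Order.TTheory GRing.Theory Num.Theory.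
Local Open Scope ring_scope.

(* Fix gamma < 1 and let y solve y = (1 - gamma) u + gamma (y o pol): the
   discounted average of the bias u along the play of the pair pol.  Then
   v i := lam + (1 - gamma) (u i - y (pol i)) satisfies, for every edge (i, j),
     (1 - gamma) r i j + gamma v j - v i
       = (1 - gamma) (r i j - lam + u j - u i + y (pol i) - y j),
   which vanishes on the edges of pol.  Each step of pol changes u by at most
   M = max |r i j - lam|, every orbit of pol enters the unique cycle within n
   steps, and a maximum principle along orbits then gives
   |y a - y b| <= 3 n^2 (1 - gamma) M.  For gamma above the threshold this is
   smaller than every nonzero reduced weight r i j - lam + u j - u i, and these
   are exactly the edges off pol (r is in P^{pol}) with the sign prescribed by
   the ergodic equation.  So v solves the discounted equation and pol is its
   only optimal pair; uniqueness on the whole interval above the threshold makes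
   optimality independent of gamma there, which bounds the Blackwell threshold. *)

Lemma eq0_of_contraction (R : realType) (n : nat) (x : 'I_n -> R) (g : R) :
    0 <= g < 1 -> (forall i, exists j k, g * x j <= x i <= g * x k) ->
  forall i, x i = 0.
Proof.
move=> /andP[g0 g1] x_between i.
case: (arg_maxP (fun k => `|x k|) (erefl : xpredT i)) => m _ m_max.
have le_m k : `|x k| <= g * `|x m|.
  have [j [l /andP[lo hi]]] := x_between k.
  have := ler_wpM2l g0 (m_max j isT); have := ler_wpM2l g0 (m_max l isT).
  have := ler_norm (x l); rewrite -[`|x j|]normrN; have := ler_norm (- x j).
  by rewrite ler_norml => *; apply/andP; split; nra.
have xm0 : `|x m| <= 0 by have := le_m m; have := normr_ge0 (x m); nra.
by apply/normr0_eq0/le_anti; rewrite normr_ge0 (le_trans (le_m i)) // mulr_ge0_le0.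
Qed.

Section FunctionalGraph.
Variables (R : realType) (n : nat) (f : 'I_n -> 'I_n).

Lemma fconnect_iter_lt x z : fconnect f x z -> exists2 k, (k < n)%N & z = iter k f x.
Proof.
move=> xz; exists (findex f x z); last by rewrite iter_findex.
apply: leq_trans (findex_max xz) _.
by rewrite /order -[X in (_ <= X)%N]card_ord max_card.
Qed.

(* After n steps every orbit of a map on n points lies on a cycle, so this
   says that f has exactly one cycle. *)
Definition unicyclic := forall a b, fconnect f (iter n f a) (iter n f b).

Section Lipschitz.
Variables (h : 'I_n -> R) (B : R).
Hypothesis h_step : forall x, `|h x - h (f x)| <= B.

Lemma dist_iter_le k x : `|h x - h (iter k f x)| <= k%:R * B.
Proof.
elim: k => [|k IH] /=; first by rewrite subrr normr0 mul0r.
rewrite -addn1 natrD mulrDl mul1r.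
have -> : h x - h (f (iter k f x)) =
          (h x - h (iter k f x)) + (h (iter k f x) - h (f (iter k f x))) by ring.
exact: le_trans (ler_normD _ _) (lerD IH (h_step _)).
Qed.

Lemma dist_fconnect_le x z : fconnect f x z -> `|h x - h z| <= n%:R * B.
Proof.
case/fconnect_iter_lt=> k /ltnW kn ->; apply: le_trans (dist_iter_le k x) _.
by rewrite ler_wpM2r ?ler_nat // (le_trans _ (h_step x)).
Qed.

Lemma dist_le_of_unicyclic : unicyclic -> forall a b, `|h a - h b| <= 3 * (n%:R * B).
Proof.
move=> uc a b.
have da := dist_fconnect_le (fconnect_iter f n a).
have db := dist_fconnect_le (fconnect_iter f n b).
have dab := dist_fconnect_le (uc a b).
have -> : h a - h b = (h a - h (iter n f a)) + (h (iter n f a) - h (iter n f b))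
                      - (h b - h (iter n f b)) by ring.
apply: le_trans (ler_normB _ _) _; apply: le_trans (lerD (ler_normD _ _) (lexx _)) _.
by have := lerD (lerD da dab) db; lra.
Qed.

End Lipschitz.

Definition succ_mx : 'M[R]_n := \matrix_(i, j) (f i == j)%:R.

Lemma succ_mxE (y : 'cV[R]_n) i : (succ_mx *m y) i 0 = y (f i) 0.
Proof.
rewrite !mxE (bigD1 (f i)) //= mxE eqxx mul1r big1 ?addr0 // => j /negbTE fij.
by rewrite mxE eq_sym fij mul0r.
Qed.

Lemma discounted_fixpoint_exists (g : R) (w : 'I_n -> R) : 0 <= g < 1 ->
  exists y : 'I_n -> R, forall x, y x = (1 - g) * w x + g * y (f x).
Proof.
move=> g01; pose A := 1%:M - g *: succ_mx.
have AE (y : 'cV_n) i : (A *m y) i 0 = y i 0 - g * y (f i) 0.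
  by rewrite mulmxBl mul1mx -scalemxAl -succ_mxE !mxE.
have A_inj (y : 'cV_n) : A *m y = 0 -> y = 0.
  move=> /matrixP Ay; apply/matrixP => i j; rewrite (ord1 j) [RHS]mxE.
  apply: (eq0_of_contraction (x := fun i => y i 0) g01) => {}i; exists (f i), (f i).
  by have := Ay i 0; rewrite AE mxE => /eqP; rewrite subr_eq0 => /eqP ->; rewrite lexx.
have A_unit : A \in unitmx.
  rewrite unitmxE unitfE -det_tr; apply/det0P => -[v v_neq0].
  rewrite -[v]trmxK -trmx_mul => /eqP; rewrite trmx_eq0 => /eqP/A_inj/eqP.
  by rewrite trmx_eq0 (negbTE v_neq0).
pose y := invmx A *m \col_i ((1 - g) * w i).
exists (fun x => y x 0) => x.
have := congr1 (fun M : 'cV[R]_n => M x 0) (mulKVmx A_unit (\col_i ((1 - g) * w i))).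
by rewrite AE /= !mxE => ?; lra.
Qed.

Lemma discounted_le_reachable (g : R) (w y : 'I_n -> R) : 0 <= g < 1 ->
    (forall x, y x = (1 - g) * w x + g * y (f x)) ->
  forall x, exists2 z, fconnect f x z & y x <= w z.
Proof.
move=> g01 y_fix x.
case: (arg_maxP y (connect0 (frel f) x)) => z xz z_max; exists z => //.
have yfz := z_max _ (connect_trans xz (fconnect1 f z)).
have yxz := z_max _ (connect0 _ x); case/andP: g01 => g0 g1.
have : (1 - g) * (y z - w z) <= 0.
  have := ler_wpM2l g0 yfz; have := y_fix z; lra.
rewrite pmulr_rle0 ?subr_gt0 // subr_le0; exact: le_trans.
Qed.

Lemma discounted_ge_reachable (g : R) (w y : 'I_n -> R) : 0 <= g < 1 ->
    (forall x, y x = (1 - g) * w x + g * y (f x)) ->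
  forall x, exists2 z, fconnect f x z & w z <= y x.
Proof.
move=> g01 y_fix x.
have neg_fix z : - y z = (1 - g) * - w z + g * - y (f z) by rewrite y_fix; ring.
have [z xz] := discounted_le_reachable g01 neg_fix x.
by rewrite lerN2; exists z.
Qed.

Lemma discounted_step_le (g : R) (w y : 'I_n -> R) (B : R) : 0 <= g < 1 ->
    (forall x, y x = (1 - g) * w x + g * y (f x)) ->
    (forall x, `|w x - w (f x)| <= B) ->
  forall x, `|y x - y (f x)| <= (1 - g) * (n%:R * B).
Proof.
move=> g01 y_fix w_step x.
have -> : y x - y (f x) = (1 - g) * (w x - y (f x)) by rewrite {1}y_fix; ring.
rewrite normrM ger0_norm ?subr_ge0; last by case/andP: g01 => _ /ltW.
apply: ler_wpM2l; first by case/andP: g01 => _ g1; rewrite subr_ge0 ltW.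
have reach z : fconnect f (f x) z -> `|w x - w z| <= n%:R * B.
  by move=> fxz; apply: (dist_fconnect_le w_step); apply: connect_trans (fconnect1 f x) fxz.
have [z1 /reach + le1] := discounted_le_reachable g01 y_fix (f x).
have [z2 /reach + le2] := discounted_ge_reachable g01 y_fix (f x).
rewrite !ler_norml => /andP[a1 b1] /andP[a2 b2]; apply/andP; split; lra.
Qed.

End FunctionalGraph.

Lemma in_Xi_unicyclic (n : nat) (f : 'I_n -> 'I_n) : in_Xi f -> unicyclic f.
Proof.
move=> [c [[_ _ c_cycle] c_unique]].
suff iter_in_c a : iter n f a \in c.
  by move=> a b; rewrite (fconnect_cycle c_cycle (iter_in_c a)).
have order_le : (order f a <= n)%N.
  by rewrite /order -[X in (_ <= X)%N]card_ord max_card.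
have /trajectP[j j_lt iter_order] := looping_order f a.
set x := iter n f a.
have /(orbitPcycle 3 0) orbit_cycle : exists k, iter k.+1 f x = x.
  exists (order f a - j).-1; rewrite prednK ?subn_gt0 // /x -iterD.
  have -> : (order f a - j + n = (n - j) + order f a)%N by lia.
  by rewrite iterD iter_order -iterD subnK //; lia.
have [k orbit_rot] : exists k, orbit f x = rot k c.
  apply: c_unique; split; [|exact: orbit_uniq|exact: orbit_cycle].
  by rewrite -size_eq0 size_orbit -lt0n order_gt0.
by rewrite -(mem_rot k) -orbit_rot in_orbit.
Qed.

Section Game.
Variables (R : realType) (n : nat) (E : rel 'I_n) (Vmax : pred 'I_n).
Variable r : 'I_n -> 'I_n -> R.

Lemma ergodic_sol_attained lam u i : ergodic_sol E Vmax r lam u ->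
  exists2 j, E i j & r i j + u j = lam + u i.
Proof. by move=> /(_ i); case: (Vmax i) => -[]. Qed.

Lemma reduced_weight_sign lam u i j : ergodic_sol E Vmax r lam u -> E i j ->
  if Vmax i then reduced_weight r lam u i j <= 0 else 0 <= reduced_weight r lam u i j.
Proof.
move=> /(_ i) sol_i Eij; rewrite /reduced_weight.
by case: (Vmax i) sol_i => -[_ /(_ j Eij)]; lra.
Qed.

Lemma in_P_tight pol lam u : in_P E Vmax r pol -> ergodic_sol E Vmax r lam u ->
  forall i, r i (pol i) + u (pol i) = lam + u i.
Proof.
move=> [_ pol_unique] sol.
pose pol' i := odflt (pol i) [pick j | E i j && (r i j + u j == lam + u i)].
have pol'P i : E i (pol' i) /\ r i (pol' i) + u (pol' i) = lam + u i.
  rewrite /pol'; case: pickP => [j /andP[Eij /eqP tj] // | no_tight].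
  have [j Eij tj] := ergodic_sol_attained i sol.
  by have := no_tight j; rewrite Eij tj eqxx.
move=> i; rewrite -(pol_unique pol' (fun i => (pol'P i).1)); first exact: (pol'P i).2.
by exists lam, u; split => // k; exact: (pol'P k).2.
Qed.

Lemma in_P_reduced_weight_neq0 pol lam u :
  policy_pair E pol -> in_P E Vmax r pol -> ergodic_sol E Vmax r lam u ->
  forall i j, E i j -> j != pol i -> reduced_weight r lam u i j != 0.
Proof.
move=> pol_edge pol_P sol i j Eij; apply: contraNneq => rw0.
pose pol' k := if k == i then j else pol k.
have -> : j = pol' i by rewrite /pol' eqxx.
apply/eqP/pol_P.2 => [k|]; first by rewrite /pol'; case: eqP => [->|].
exists lam, u; split => // k; rewrite /pol'; case: eqP => [->|_].
  by move: rw0; rewrite /reduced_weight; lra.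
exact: in_P_tight.
Qed.

Lemma disc_value_unique g v v' : 0 <= g < 1 ->
  disc_value E Vmax r g v -> disc_value E Vmax r g v' -> v =1 v'.
Proof.
move=> g01 v_val v'_val i; apply/eqP; rewrite -subr_eq0; apply/eqP.
apply: (eq0_of_contraction (x := fun i => v i - v' i) g01) => {}i /=.
case: (Vmax i) (v_val i) (v'_val i) => -[[j1 E1 e1] le1] [[j2 E2 e2] le2].
- exists j2, j1; have := le1 _ E2; have := le2 _ E1.
  by move=> *; apply/andP; split; lra.
- exists j1, j2; have := le1 _ E2; have := le2 _ E1.
  by move=> *; apply/andP; split; lra.
Qed.

Lemma unique_optimal_of_gap pol lam u (y : 'I_n -> R) g :
    policy_pair E pol -> ergodic_sol E Vmax r lam u ->
    (forall i, r i (pol i) + u (pol i) = lam + u i) -> 0 <= g < 1 ->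
    (forall i, y i = (1 - g) * u i + g * y (pol i)) ->
    (forall i j, E i j -> j != pol i ->
       `|y (pol i) - y j| < `|reduced_weight r lam u i j|) ->
  unique_optimal_pair E Vmax r g pol.
Proof.
move=> pol_edge sol tight g01 y_fix gap.
have g1 : 0 < 1 - g by case/andP: g01 => _; rewrite subr_gt0.
pose v i := lam + (1 - g) * (u i - y (pol i)).
pose Q i j := (1 - g) * r i j + g * v j.
have Q_sub_v i j :
    Q i j - v i = (1 - g) * (reduced_weight r lam u i j + (y (pol i) - y j)).
  by rewrite /Q /v /reduced_weight (y_fix j); ring.
have pol_att i : v i = (1 - g) * r i (pol i) + g * v (pol i).
  have rw0 : reduced_weight r lam u i (pol i) = 0.
    by rewrite /reduced_weight; have := tight i; lra.
  by apply/eqP; rewrite eq_sym -subr_eq0 Q_sub_v rw0 subrr addr0 mulr0.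
have Q_off_pol i j : E i j -> j != pol i -> if Vmax i then Q i j < v i else v i < Q i j.
  move=> Eij /(gap _ _ Eij) lt_gap.
  have := reduced_weight_sign sol Eij; case: (Vmax i) => rw_sign.
    rewrite -subr_lt0 Q_sub_v pmulr_rlt0 //.
    by move: lt_gap; rewrite (ler0_norm rw_sign) ltr_norml => /andP[]; lra.
  rewrite -subr_gt0 Q_sub_v pmulr_rgt0 //.
  by move: lt_gap; rewrite (ger0_norm rw_sign) ltr_norml => /andP[]; lra.
have v_val : disc_value E Vmax r g v.
  move=> i; have Q_off := Q_off_pol i.
  case: (Vmax i) Q_off => Q_off;
    (split; first by exists (pol i); [apply: pol_edge | rewrite -pol_att]);
    move=> j Eij; have [->|/(Q_off j Eij)/ltW//] := eqVneq j (pol i);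
    by rewrite -pol_att.
split; first by exists v.
move=> v' /(disc_value_unique g01 v_val) v_v'; split => [i|pol' pol'_edge pol'_att i].
  by rewrite -!v_v' -pol_att.
apply/eqP; apply: contraT => /(Q_off_pol i _ (pol'_edge i)).
by rewrite /Q !v_v' -pol'_att; case: (Vmax i); rewrite ltxx.
Qed.

Lemma unique_optimal_agree (P : pred 'I_n) g pol sigma v :
    policy_pair E pol -> unique_optimal_pair E Vmax r g pol ->
    disc_value E Vmax r g v -> (forall i, P i -> E i (sigma i)) ->
    (forall i, P i -> v i = (1 - g) * r i (sigma i) + g * v (sigma i)) ->
  forall i, P i -> sigma i = pol i.
Proof.
move=> pol_edge [_ pol_unique] v_val sigma_edge sigma_att i Pi.
have [pol_att pol_only] := pol_unique v v_val.
pose pol' k := if P k then sigma k else pol k.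
have pol'_edge : policy_pair E pol'.
  by move=> k; rewrite /pol'; case: ifP => Pk; [apply: sigma_edge | apply: pol_edge].
have pol'_att : pair_attains r g v pol'.
  by move=> k; rewrite /pol'; case: ifP => Pk; [apply: sigma_att | apply: pol_att].
by have := pol_only pol' pol'_edge pol'_att i; rewrite /pol' Pi.
Qed.

Lemma blackwell_property_of_unique_optimal g0 pol : policy_pair E pol ->
    (forall g, g0 < g < 1 -> unique_optimal_pair E Vmax r g pol) ->
  blackwell_property E Vmax r g0.
Proof.
move=> pol_edge optimal; split.
  move=> sigma sigma_edge [g [g_range [v [v_val sigma_att]]]] g' g'_range.
  have agree := unique_optimal_agree pol_edge (optimal g g_range) v_val sigma_edge sigma_att.
  have [[v' v'_val] pol_unique] := optimal g' g'_range.
  by exists v'; split => // i Vi; rewrite agree //; apply: (pol_unique v' v'_val).1.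
move=> tau tau_edge [g [g_range [v [v_val tau_att]]]] g' g'_range.
have agree := unique_optimal_agree (P := predC Vmax) pol_edge (optimal g g_range) v_val
  tau_edge tau_att.
have [[v' v'_val] pol_unique] := optimal g' g'_range.
by exists v'; split => // i Vi; rewrite agree //; apply: (pol_unique v' v'_val).1.
Qed.

End Game.

Lemma foldr_min_le d (T : orderType d) (x : T) s y :
  y \in x :: s -> (foldr Order.min x s <= y)%O.
Proof.
elim: s y => [|z s IH] y /=; first by rewrite inE => /eqP ->.
rewrite !inE ge_min => /orP[/eqP->|/orP[/eqP->|ys]].
- by rewrite IH ?mem_head ?orbT.
- by rewrite lexx.
- by rewrite IH ?inE ?ys ?orbT.
Qed.

Lemma foldr_min_mem d (T : orderType d) (x : T) s : foldr Order.min x s \in x :: s.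
Proof.
elim: s => [|z s IH] /=; first exact: mem_head.
rewrite minEle; case: ifP => _; rewrite !inE ?eqxx ?orbT //.
by move: IH; rewrite inE => /orP[-> | ->]; rewrite ?orbT.
Qed.

Section DeltaBounds.
Variables (R : realType) (n : nat) (E : rel 'I_n) (r : 'I_n -> 'I_n -> R).
Variables (lam : R) (u : 'I_n -> R).

Definition max_deviation : R :=
  \big[Num.max/0]_(i : 'I_n) \big[Num.max/0]_(j : 'I_n | E i j) `|r i j - lam|.

Lemma max_deviation_ge0 : 0 <= max_deviation.
Proof. exact: bigmax_ge_id. Qed.

Lemma le_max_deviation i j : E i j -> `|r i j - lam| <= max_deviation.
Proof.
move=> Eij; apply: le_trans (le_bigmax _ _ i).
exact: (le_bigmax_cond _ (fun j => `|r i j - lam|) Eij).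
Qed.

Lemma tight_step_le pol : policy_pair E pol ->
    (forall i, r i (pol i) + u (pol i) = lam + u i) ->
  forall i, `|u i - u (pol i)| <= max_deviation.
Proof.
move=> pol_edge tight i.
have -> : u i - u (pol i) = r i (pol i) - lam by have := tight i; lra.
exact: le_max_deviation (pol_edge i).
Qed.

Local Notation rw := (reduced_weight r lam u).

Lemma Delta_cases :
  (Delta E r lam u = 1 /\ forall i j, E i j -> rw i j = 0) \/
  exists i0 j0, [/\ E i0 j0, rw i0 j0 != 0,
    Delta E r lam u = max_deviation / `|rw i0 j0| &
    forall i j, E i j -> rw i j != 0 -> `|rw i0 j0| <= `|rw i j|].
Proof.
rewrite /Delta -/max_deviation.
set edges := [seq p <- _ | _].
have mem_edges i j : E i j -> rw i j != 0 -> (i, j) \in edges.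
  by move=> Eij rw_neq0; rewrite mem_filter /= Eij rw_neq0 mem_enum in_setT.
case def_s: [seq _ | p <- edges] => [|x s].
  left; split => // i j Eij; apply/eqP/negP => /negP rw_neq0.
  by have := map_f (fun p => `|rw p.1 p.2|) (mem_edges i j Eij rw_neq0); rewrite def_s.
have := foldr_min_mem x s; rewrite -[in X in _ \in X]def_s => /mapP[[i0 j0]].
rewrite mem_filter /= => /andP[/andP[E0 rw0_neq0] _] m_def.
right; exists i0, j0; split; rewrite -?m_def //.
move=> i j Eij rw_neq0; apply: (@foldr_min_le _ R); rewrite -def_s.
by apply/mapP; exists (i, j); first exact: mem_edges.
Qed.

Lemma Delta_ge0 : 0 <= Delta E r lam u.
Proof.
case: Delta_cases => [[-> _] | [i0 [j0 [_ _ -> _]]]]; first exact: ler01.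
by rewrite divr_ge0 ?max_deviation_ge0.
Qed.

Lemma max_deviation_le_Delta i j : E i j -> rw i j != 0 ->
  max_deviation <= Delta E r lam u * `|rw i j|.
Proof.
move=> Eij rw_neq0.
case: Delta_cases => [[_ /(_ i j Eij)/eqP] | [i0 [j0 [_ rw0_neq0 -> min0]]]].
  by rewrite (negbTE rw_neq0).
have rw0_gt0 : 0 < `|rw i0 j0| by rewrite normr_gt0.
rewrite -[X in X <= _](divfK (lt0r_neq0 rw0_gt0)).
by rewrite ler_wpM2l ?divr_ge0 ?max_deviation_ge0 // min0.
Qed.

Lemma reduced_weight_gap g i j : 1 - (6 * n%:R ^+ 2 * Delta E r lam u)^-1 < g ->
    E i j -> rw i j != 0 ->
  (1 - g) * (3 * n%:R ^+ 2 * max_deviation) < `|rw i j|.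
Proof.
move=> lt_g Eij rw_neq0; have rw_gt0 : 0 < `|rw i j| by rewrite normr_gt0.
have M0 := max_deviation_ge0; have N2_ge0 : 0 <= (n%:R : R) ^+ 2 by rewrite exprn_ge0.
have [g1|lt1g] := leP 1 g.
  apply: le_lt_trans rw_gt0; rewrite mulr_le0_ge0 ?subr_le0 //.
  by rewrite !mulr_ge0 ?ler0n.
set X := 6 * n%:R ^+ 2 * Delta E r lam u in lt_g *.
have X_gt0 : 0 < X by rewrite -invr_gt0; lra.
have aX_lt1 : (1 - g) * X < 1 by rewrite -ltr_pdivlMr // div1r; lra.
have a_gt0 : 0 < 1 - g by rewrite subr_gt0.
have := ler_wpM2l (mulr_ge0 (ltW a_gt0) (mulr_ge0 (ler0n _ 3) N2_ge0))
  (max_deviation_le_Delta Eij rw_neq0).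
have : (1 - g) * X * `|rw i j| < `|rw i j| by rewrite -[X in _ < X]mul1r ltr_pM2r.
rewrite /X; lra.
Qed.

Section BoundedBias.
Hypothesis u_diam : forall a b, `|u a - u b| <= 3 * (n%:R * max_deviation).

Lemma threshold_in_range : 0 < 1 - (6 * n%:R ^+ 2 * Delta E r lam u)^-1 <= 1.
Proof.
set X := 6 * n%:R ^+ 2 * Delta E r lam u.
have X_ge0 : 0 <= X by rewrite !mulr_ge0 ?exprn_ge0 ?ler0n ?Delta_ge0.
have [X0|X_neq0] := eqVneq X 0; first by rewrite X0 invr0 subr0 ltr01 lexx.
suff X_gt1 : 1 < X.
  by rewrite subr_gt0 invf_lt1 ?X_gt1 ?(lt_trans ltr01) //= lerBlDr lerDl invr_ge0.
have n_gt0 : (0 < n)%N.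
  rewrite -(ltr0n R) lt0r ler0n andbT; apply: contraNneq X_neq0 => N0.
  by rewrite /X N0 expr0n /= mulr0 mul0r.
have N1 : 1 <= (n%:R : R) by rewrite ler1n.
case: Delta_cases X_neq0 => [[D1 _] | [i0 [j0 [E0 rw0_neq0 D _]]]] X_neq0.
  by rewrite /X D1 mulr1; nra.
have M_gt0 : 0 < max_deviation.
  rewrite lt0r max_deviation_ge0 andbT; apply: contraNneq X_neq0 => M0.
  by rewrite /X D M0 mul0r mulr0.
have rw0_gt0 : 0 < `|rw i0 j0| by rewrite normr_gt0.
have rw0_le : `|rw i0 j0| <= (1 + 3 * n%:R) * max_deviation.
  have -> : rw i0 j0 = (r i0 j0 - lam) + (u j0 - u i0) by rewrite /reduced_weight; ring.
  apply: le_trans (ler_normD _ _) _; have := le_max_deviation E0; have := u_diam j0 i0; lra.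
rewrite /X D mulrA ltr_pdivlMr // mul1r; apply: le_lt_trans rw0_le _.
by rewrite ltr_pM2r //; nra.
Qed.

End BoundedBias.
End DeltaBounds.

Theorem mainTheorem17 (R : realType) (n : nat) (E : rel 'I_n) (Vmax : pred 'I_n)
    (r : 'I_n -> 'I_n -> R) (pol : 'I_n -> 'I_n) (lam : R) (u : 'I_n -> R) :
  (forall i : 'I_n, exists j, E i j) ->
  ergodic_graph_over E Vmax R ->
  policy_pair E pol -> in_Xi pol -> in_P E Vmax r pol ->
  ergodic_sol E Vmax r lam u ->
  (forall gamma : R,
     1 - (6 * n%:R ^+ 2 * Delta E r lam u)^-1 < gamma < 1 ->
     unique_optimal_pair E Vmax r gamma pol) /\
  (forall gs : R, blackwell_threshold E Vmax r gs ->
     gs <= 1 - (6 * n%:R ^+ 2 * Delta E r lam u)^-1).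
Proof.
move=> _ _ pol_edge pol_Xi pol_P sol.
have tight := in_P_tight pol_P sol.
have u_step := tight_step_le pol_edge tight.
have unicyc := in_Xi_unicyclic pol_Xi.
have /andP[thr_gt0 thr_le1] := threshold_in_range (dist_le_of_unicyclic u_step unicyc).
have optimal g : 1 - (6 * n%:R ^+ 2 * Delta E r lam u)^-1 < g < 1 ->
    unique_optimal_pair E Vmax r g pol.
  move=> /andP[lt_g g1]; have g01 : 0 <= g < 1 by rewrite g1 andbT; lra.
  have [y y_fix] := discounted_fixpoint_exists pol u g01.
  have y_diam := dist_le_of_unicyclic (discounted_step_le g01 y_fix u_step) unicyc.
  apply: (unique_optimal_of_gap pol_edge sol tight g01 y_fix) => i j Eij j_neq.
  apply: le_lt_trans (y_diam _ _) _.
  rewrite [X in X < _](_ : _ = (1 - g) * (3 * n%:R ^+ 2 * max_deviation E r lam));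
    last by ring.
  exact: reduced_weight_gap lt_g Eij (in_P_reduced_weight_neq0 pol_edge pol_P sol Eij j_neq).
split => [//|gs [/andP[gs_gt0 gs_lt1] [_ gs_min]]].
have [->|thr_lt1] := eqVneq (1 - (6 * n%:R ^+ 2 * Delta E r lam u)^-1) 1; first exact: ltW.
apply: gs_min; last exact: blackwell_property_of_unique_optimal pol_edge optimal.
by rewrite thr_gt0 lt_neqAle thr_lt1.
Qed.
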